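(* Let $\mathcal F$ be a proper filter on $\omega$ and consider the game $\mathfrak G(\mathcal F,\omega,\mathcal F)$. Then (1) player I has a winning strategy if and only if $\mathcal F$ is not Ramsey; (2) player II never has a winning strategy.
   Context: A filter on $\omega$ is a family $\mathcal F\subseteq\mathcal P(\omega)$ closed under finite intersections and supersets and containing all cofinite sets; it is proper if all its members are infinite. Game $\mathfrak G(\mathcal X,\omega,\mathcal Z)$: at each stage $k\in\omega$, player I chooses $X_k\in\mathcal X$ and player II responds with $n_k\in X_k$; II wins if $\{n_k:k\in\omega\}\in\mathcal Z$, otherwise I wins. A tree is a set $T$ of finite sequences of natural numbers containing the empty sequence and closed under initial segments; for $\mathcal X\subseteq\mathcal P(\omega)$ it is an $\mathcal X$-tree if for each $\bar s\in T$ there is $X_{\bar s}\in\mathcal X$ with $\bar s^\frown n\in T$ for all $n\in X_{\bar s}$. A branch is an infinite sequence all of whose finite initial segments lie in $T$; a branch is ''in'' a family if its set of values belongs to that family. $\mathcal F$ is Ramsey if every $\mathcal F$-tree has a branch in $\mathcal F$ (equivalently, $\mathcal F$ is both a Q-filter and a P-filter, where a Q-filter is one such that for every partition of $\omega$ into finite sets $s_k$ there is $X\in\mathcal F$ with $|X\cap s_k|\le 1$ for all $k$, and a P-filter is one such that every countable subfamily $\{X_n\}$ has some $X\in\mathcal F$ with $X\setminus X_n$ finite for all $n$). *)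

From mathcomp Require Import all_boot.
Set Implicit Arguments.
Unset Strict Implicit.
Unset Printing Implicit Defensive.

Definition nset := nat -> Prop.
Definition nfamily := nset -> Prop.

Definition cofinite (A : nset) : Prop := exists N, forall n, N <= n -> A n.
Definition infinite_set (A : nset) : Prop := forall N, exists n, N <= n /\ A n.

Definition is_filter (F : nfamily) : Prop :=
  [/\ (forall A B, F A -> F B -> F (fun n => A n /\ B n)),
      (forall A B, F A -> (forall n, A n -> B n) -> F B)
    & (forall A, cofinite A -> F A)].

Definition proper_filter (F : nfamily) : Prop :=
  is_filter F /\ forall A, F A -> infinite_set A.

Definition range_of (f : nat -> nat) : nset := fun m => exists k, f k = m.

Definition is_tree (T : seq nat -> Prop) : Prop :=
  T [::] /\ forall s t, T (s ++ t) -> T s.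

Definition X_tree (X : nfamily) (T : seq nat -> Prop) : Prop :=
  is_tree T /\
  forall s, T s -> exists Xs, X Xs /\ forall n, Xs n -> T (rcons s n).

Definition branch (T : seq nat -> Prop) (f : nat -> nat) : Prop :=
  forall k, T (mkseq f k).

Definition Ramsey (F : nfamily) : Prop :=
  forall T, X_tree F T -> exists f, branch T f /\ F (range_of f).

(* The game G(X, omega, Z): at stage k, I plays X_k in X, II answers n_k in X_k;
   II wins iff {n_k : k} in Z. *)

(* A strategy for I maps the finite history of II's moves (n_0,...,n_{k-1}) to
   I's next move X_k (I's own earlier moves are determined by the strategy). *)
Definition strategyI (X : nfamily) (tau : seq nat -> nset) : Prop :=
  forall s, X (tau s).

Definition playI_consistent (tau : seq nat -> nset) (n : nat -> nat) : Prop :=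
  forall k, tau (mkseq n k) (n k).

Definition I_winning (X Z : nfamily) (tau : seq nat -> nset) : Prop :=
  strategyI X tau /\
  forall n, playI_consistent tau n -> ~ Z (range_of n).

(* A strategy for II maps the history of I's moves (X_0,...,X_k) to n_k;
   it must be legal: n_k in X_k whenever all X_i are legal moves. *)
Definition strategyII (X : nfamily) (sigma : seq nset -> nat) : Prop :=
  forall Xs : nat -> nset, (forall k, X (Xs k)) ->
    forall k, Xs k (sigma (mkseq Xs k.+1)).

Definition II_winning (X Z : nfamily) (sigma : seq nset -> nat) : Prop :=
  strategyII X sigma /\
  forall Xs : nat -> nset, (forall k, X (Xs k)) ->
    Z (range_of (fun k => sigma (mkseq Xs k.+1))).

From mathcomp Require Import all_boot.
From Stdlib Require Import Classical IndefiniteDescription FunctionalExtensionality.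

Set Implicit Arguments.
Unset Strict Implicit.

(* (1) The plays consistent with a strategy of I form an F-tree, and an F-tree
   is turned into a strategy of I by playing the witnessing set at each node;
   so I wins exactly when some F-tree has no branch in F.
   (2) Against a strategy sigma of II, I runs two plays A and B in parallel:
   in A he forbids every answer already given in B, and in B every answer
   already given in A.  If sigma won both, the two ranges would be in F, hence
   would meet, yet they are disjoint by construction. *)

Lemma take_mkseq (T : Type) (f : nat -> T) j k :
  j <= k -> take j (mkseq f k) = mkseq f j.
Proof. by move=> le_jk; rewrite /mkseq -map_take take_iota (minn_idPl le_jk). Qed.

Lemma mkseq_in_ext (T : Type) (f g : nat -> T) n :
  (forall j, j < n -> f j = g j) -> mkseq f n = mkseq g n.
Proof. by move=> efg; apply/eq_in_map => j; rewrite mem_iota => /andP[_]; apply: efg. Qed.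

Lemma mem_mkseq_lt (f : nat -> nat) i k : i < k -> f i \in mkseq f k.
Proof. by move=> lt_ik; apply: map_f; rewrite mem_iota. Qed.

Definition consistent_tree (tau : seq nat -> nset) (s : seq nat) : Prop :=
  forall k, k < size s -> tau (take k s) (nth 0 s k).

Lemma consistent_X_tree (X : nfamily) tau :
  strategyI X tau -> X_tree X (consistent_tree tau).
Proof.
move=> tauX; split; first split.
- by [].
- move=> s t Tst k lt_ks.
  have := Tst k; rewrite size_cat takel_cat ?(ltnW lt_ks) // nth_cat lt_ks.
  by apply; apply: leq_trans lt_ks (leq_addr _ _).
- move=> s Ts; exists (tau s); split => // n tau_s_n k.
  rewrite size_rcons ltnS leq_eqVlt -cats1 => /orP[/eqP-> | lt_ks].
    by rewrite take_size_cat // nth_cat ltnn subnn.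
  by rewrite takel_cat ?(ltnW lt_ks) // nth_cat lt_ks; apply: Ts.
Qed.

Lemma branch_consistent_tree tau f :
  branch (consistent_tree tau) f -> playI_consistent tau f.
Proof.
move=> bf k; have := bf k.+1 k; rewrite size_mkseq ltnSn => /(_ isT).
by rewrite mkseqS -cats1 take_size_cat ?size_mkseq // nth_cat size_mkseq ltnn subnn.
Qed.

Lemma X_tree_strategyI (X : nfamily) T : X_tree X T ->
  exists tau, strategyI X tau /\ forall f, playI_consistent tau f -> branch T f.
Proof.
move=> [[T0 _] TX].
have [X0 [X0X _]] := TX _ T0.
have /functional_choice [tau tauP] :
    forall s, exists Xs, X Xs /\ (T s -> forall n, Xs n -> T (rcons s n)).
  move=> s; case: (classic (T s)) => [Ts | nTs].
    by have [Xs [XsX XsT]] := TX s Ts; exists Xs.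
  by exists X0.
exists tau; split=> [s | f tau_f k]; first by case: (tauP s).
elim: k => [// | k IHk]; rewrite mkseqS.
by case: (tauP (mkseq f k)) => _; apply.
Qed.

Lemma I_winningP (X Z : nfamily) :
  (exists tau, I_winning X Z tau) <->
  exists T, X_tree X T /\ forall f, branch T f -> ~ Z (range_of f).
Proof.
split=> [[tau [tauX tau_wins]] | [T [XT noZ]]].
  exists (consistent_tree tau); split; first exact: consistent_X_tree.
  by move=> f /branch_consistent_tree; apply: tau_wins.
have [tau [tauX tauT]] := X_tree_strategyI XT.
by exists tau; split=> // f /tauT; apply: noZ.
Qed.

Lemma not_RamseyP (F : nfamily) :
  ~ Ramsey F <-> exists T, X_tree F T /\ forall f, branch T f -> ~ F (range_of f).
Proof.
split=> [nR | [T [FT noF]] R]; last first.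
  by have [f [bf Ff]] := R T FT; apply: noF Ff.
apply: NNPP => noT; apply: nR => T FT; apply: NNPP => noB.
by apply: noT; exists T; split=> // f bf Ff; apply: noB; exists f.
Qed.

Fixpoint history (T : Type) (G : seq T -> T) (n : nat) : seq T :=
  if n is k.+1 then rcons (history G k) (G (history G k)) else [::].

Definition course_of_values (T : Type) (G : seq T -> T) (n : nat) : T :=
  G (history G n).

Lemma course_of_valuesE (T : Type) (G : seq T -> T) n :
  course_of_values G n = G (mkseq (course_of_values G) n).
Proof.
rewrite /course_of_values; congr G.
by elim: n => [// | n IHn] /=; rewrite mkseqS -IHn.
Qed.

Definition avoid (s : seq nat) : nset := fun m => m \notin s.

Lemma cofinite_avoid s : cofinite (avoid s).
Proof.
exists (\max_(x <- s) x).+1 => n lt_max_n; apply/negP => s_n.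
by have := leq_bigmax_seq (F := id) (P := predT) _ s_n isT; rewrite leqNgt lt_max_n.
Qed.

Section TwoParallelPlays.

Variable sigma : seq nset -> nat.

(* Up to stage k, I's moves in both plays only involve (a_i, b_i) for i < k
   and a_k, so the plays are built by course-of-values recursion on pairs. *)
Definition next_a (h : seq (nat * nat)) : nat :=
  sigma (mkseq (fun j => avoid (take j (unzip2 h))) (size h).+1).

Definition next_b (h : seq (nat * nat)) : nat :=
  sigma (mkseq (fun j => avoid (take j.+1 (rcons (unzip1 h) (next_a h))))
               (size h).+1).

Definition parallel_plays : nat -> nat * nat :=
  course_of_values (fun h => (next_a h, next_b h)).

Definition play_a k := (parallel_plays k).1.
Definition play_b k := (parallel_plays k).2.

Definition moves_a j := avoid (mkseq play_b j).
Definition moves_b j := avoid (mkseq play_a j.+1).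

Lemma parallel_playsE k :
  parallel_plays k = (next_a (mkseq parallel_plays k), next_b (mkseq parallel_plays k)).
Proof. exact: course_of_valuesE. Qed.

Lemma unzip_parallel_plays k :
  unzip1 (mkseq parallel_plays k) = mkseq play_a k /\
  unzip2 (mkseq parallel_plays k) = mkseq play_b k.
Proof. by rewrite /unzip1 /unzip2 -!map_comp. Qed.

Lemma play_aE k : play_a k = sigma (mkseq moves_a k.+1).
Proof.
rewrite {1}/play_a parallel_playsE /next_a size_mkseq.
have [_ ->] := unzip_parallel_plays k.
by congr sigma; apply: mkseq_in_ext => j lt_jk; rewrite take_mkseq.
Qed.

Lemma play_bE k : play_b k = sigma (mkseq moves_b k.+1).
Proof.
rewrite {1}/play_b parallel_playsE /next_b size_mkseq.
have [-> _] := unzip_parallel_plays k.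
have -> : next_a (mkseq parallel_plays k) = play_a k.
  by rewrite /play_a parallel_playsE.
by rewrite -mkseqS; congr sigma; apply: mkseq_in_ext => j lt_jk; rewrite take_mkseq.
Qed.

End TwoParallelPlays.

Lemma no_II_winning (X Z : nfamily) :
  (forall A, cofinite A -> X A) ->
  (forall A B, Z A -> Z B -> exists n, A n /\ B n) ->
  ~ exists sigma, II_winning X Z sigma.
Proof.
move=> Xcof Zmeet [sigma [sigma_legal sigma_wins]].
have Xa j : X (moves_a sigma j) by apply: Xcof; apply: cofinite_avoid.
have Xb j : X (moves_b sigma j) by apply: Xcof; apply: cofinite_avoid.
have legal_a k : moves_a sigma k (play_a sigma k).
  by rewrite play_aE; apply: sigma_legal.
have legal_b k : moves_b sigma k (play_b sigma k).
  by rewrite play_bE; apply: sigma_legal.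
have Za : Z (range_of (play_a sigma)).
  by rewrite (functional_extensionality _ _ (@play_aE sigma)); apply: sigma_wins.
have Zb : Z (range_of (play_b sigma)).
  by rewrite (functional_extensionality _ _ (@play_bE sigma)); apply: sigma_wins.
have [_ [[i <-] [j eq_ba]]] := Zmeet _ _ Za Zb.
have [le_ij | lt_ji] := leqP i j.
  by move/negP: (legal_b j); apply; rewrite eq_ba mem_mkseq_lt.
by move/negP: (legal_a i); apply; rewrite -eq_ba mem_mkseq_lt.
Qed.

Lemma proper_filter_meet (F : nfamily) :
  proper_filter F -> forall A B, F A -> F B -> exists n, A n /\ B n.
Proof.
move=> [[FI _ _] Finf] A B FA FB.
by have [n [_ ABn]] := Finf _ (FI _ _ FA FB) 0; exists n.
Qed.

Theorem theorem2p6 (F : nfamily) (hF : proper_filter F) :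
  ((exists tau, I_winning F F tau) <-> ~ Ramsey F) /\
  ~ (exists sigma, II_winning F F sigma).
Proof.
split; first by rewrite I_winningP not_RamseyP.
have [[_ _ Fcof] _] := hF.
exact: no_II_winning Fcof (proper_filter_meet hF).
Qed.
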